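(* Let $\mathcal{F}$ be an algebraically closed field of characteristic not $2$, $u,v\in\mathcal{F}$ nonzero, and $\mathcal{F}_2=\mathcal{F}\{e_1,e_2\}$ the $4$-dimensional $\mathcal{F}$-algebra with basis $1,e_1,e_2,e_{12}=e_1e_2$, where $e_1^2=u$, $e_2^2=v$, $e_1e_2=-e_2e_1$. Every $a\in\mathcal{F}_2$ can be written as $a=a_0+a_1e_1+a_2e_2+a_3e_{12}$ with $a_0,\dots,a_3\in\mathcal{F}$. Fix square roots $\sqrt u,\sqrt v\in\mathcal{F}$ and let $$R=\frac12\begin{pmatrix}1+\frac1{\sqrt u}e_1 & e_2-\frac1{\sqrt u}e_{12}\\ \frac1v(e_2+\frac1{\sqrt u}e_{12}) & 1-\frac1{\sqrt u}e_1\end{pmatrix},\qquad T=\frac12\begin{pmatrix}1+\frac1{\sqrt v}e_2 & e_1+\frac1{\sqrt v}e_{12}\\ \frac1u(e_1-\frac1{\sqrt v}e_{12}) & 1-\frac1{\sqrt v}e_2\end{pmatrix}.$$ Then $R^{-1}=R$, $T^{-1}=T$, and for every such $a$, $$R\begin{pmatrix}a&0\\0&a\end{pmatrix}R^{-1}=\begin{pmatrix}a_0+\sqrt u\,a_1 & v(a_2+\sqrt u\,a_3)\\ a_2-\sqrt u\,a_3 & a_0-\sqrt u\,a_1\end{pmatrix},$$ $$T\begin{pmatrix}a&0\\0&a\end{pmatrix}T^{-1}=\begin{pmatrix}a_0+\sqrt v\,a_2 & u(a_1-\sqrt v\,a_3)\\ a_1+\sqrt v\,a_3 & a_0-\sqrt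 v\,a_2\end{pmatrix}.$$ *)

From HB Require Import structures.
From mathcomp Require Import all_boot all_order all_algebra.
From mathcomp Require Import ring.
Set Implicit Arguments. Unset Strict Implicit. Unset Printing Implicit Defensive.
Import Order.TTheory GRing.Theory Num.Theory.
Local Open Scope ring_scope.

(* The generalized quaternion algebra F_2 = F{e1,e2} with e1^2 = u, e2^2 = v,
   e1 e2 = - e2 e1, realised on coordinate 4-tuples (a0,a1,a2,a3) w.r.t. the
   basis 1, e1, e2, e12 = e1 e2. *)
Definition quat (F : fieldType) (u v : F) : Type := (F * F * F * F)%type.

Section Quat.
Variables (F : fieldType) (u v : F).
Local Notation Q := (quat u v).

HB.instance Definition _ := GRing.Zmodule.on Q.

Definition qmk (a0 a1 a2 a3 : F) : Q := (a0, a1, a2, a3).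
Definition q0 (a : Q) : F := a.1.1.1.
Definition q1 (a : Q) : F := a.1.1.2.
Definition q2 (a : Q) : F := a.1.2.
Definition q3 (a : Q) : F := a.2.

Definition qmul (a b : Q) : Q :=
  qmk (q0 a * q0 b + u * q1 a * q1 b + v * q2 a * q2 b - u * v * q3 a * q3 b)
      (q0 a * q1 b + q1 a * q0 b - v * q2 a * q3 b + v * q3 a * q2 b)
      (q0 a * q2 b + q2 a * q0 b + u * q1 a * q3 b - u * q3 a * q1 b)
      (q0 a * q3 b + q3 a * q0 b + q1 a * q2 b - q2 a * q1 b).

Definition qone : Q := qmk 1 0 0 0.

Lemma qE (a : Q) : a = qmk (q0 a) (q1 a) (q2 a) (q3 a).
Proof. by case: a => [[[]]]. Qed.

Lemma qaddE (a0 a1 a2 a3 b0 b1 b2 b3 : F) :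
  ((a0, a1, a2, a3) + (b0, b1, b2, b3) : Q) = (a0 + b0, a1 + b1, a2 + b2, a3 + b3).
Proof. by []. Qed.

Lemma qmulA : associative qmul.
Proof.
move=> [[[a0 a1] a2] a3] [[[b0 b1] b2] b3] [[[c0 c1] c2] c3].
rewrite /qmul /qmk /q0 /q1 /q2 /q3 /=; congr (_, _, _, _); ring.
Qed.

Lemma qmul1 : left_id qone qmul.
Proof.
move=> [[[a0 a1] a2] a3]; rewrite /qmul /qmk /q0 /q1 /q2 /q3 /=.
congr (_, _, _, _); ring.
Qed.

Lemma qmulr1 : right_id qone qmul.
Proof.
move=> [[[a0 a1] a2] a3]; rewrite /qmul /qmk /q0 /q1 /q2 /q3 /=.
congr (_, _, _, _); ring.
Qed.

Lemma qmulDl : left_distributive qmul +%R.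
Proof.
move=> [[[a0 a1] a2] a3] [[[b0 b1] b2] b3] [[[c0 c1] c2] c3].
rewrite ?qaddE /qmul /qmk /q0 /q1 /q2 /q3 /= ?qaddE; congr (_, _, _, _); ring.
Qed.

Lemma qmulDr : right_distributive qmul +%R.
Proof.
move=> [[[a0 a1] a2] a3] [[[b0 b1] b2] b3] [[[c0 c1] c2] c3].
rewrite ?qaddE /qmul /qmk /q0 /q1 /q2 /q3 /= ?qaddE; congr (_, _, _, _); ring.
Qed.

Lemma qone_neq0 : qone != 0.
Proof. by apply/eqP => /(congr1 q0); rewrite /q0 /= => /eqP; rewrite oner_eq0. Qed.

HB.instance Definition _ :=
  GRing.Zmodule_isNzRing.Build Q qmulA qmul1 qmulr1 qmulDl qmulDr qone_neq0.

Definition qsc (c : F) : Q := qmk c 0 0 0.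
Definition e1 : Q := qmk 0 1 0 0.
Definition e2 : Q := qmk 0 0 1 0.
Definition e12 : Q := e1 * e2.

Definition qelt (a0 a1 a2 a3 : F) : Q :=
  qsc a0 + qsc a1 * e1 + qsc a2 * e2 + qsc a3 * e12.

Definition mx2 (a b c d : Q) : 'M[Q]_2 :=
  \matrix_(i < 2, j < 2)
    if i == 0 :> nat then (if j == 0 :> nat then a else b)
    else (if j == 0 :> nat then c else d).

Definition Rmx (su : F) : 'M[Q]_2 :=
  mx2 (qsc (1/2) * (1 + qsc su^-1 * e1))
      (qsc (1/2) * (e2 - qsc su^-1 * e12))
      (qsc (1/2) * (qsc v^-1 * (e2 + qsc su^-1 * e12)))
      (qsc (1/2) * (1 - qsc su^-1 * e1)).

Definition Tmx (sv : F) : 'M[Q]_2 :=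
  mx2 (qsc (1/2) * (1 + qsc sv^-1 * e2))
      (qsc (1/2) * (e1 + qsc sv^-1 * e12))
      (qsc (1/2) * (qsc u^-1 * (e1 - qsc sv^-1 * e12)))
      (qsc (1/2) * (1 - qsc sv^-1 * e2)).

End Quat.

(* In the coordinates (a0, a1, a2, a3) of the basis 1, e1, e2, e12 every entry
   of R, T and of the products below is a tuple of rational functions in
   u, v and the square roots, so each claimed matrix identity reduces to
   sixteen field identities, which hold once u and v are replaced by the
   squares of their roots. *)

From HB Require Import structures.
From mathcomp Require Import all_boot all_order all_algebra.
From mathcomp Require Import ring.
Import GRing.Theory.
Local Open Scope ring_scope.

(* Locked, so that rewriting with [qcM] cannot unify a tuple with a sum or
   product of tuples, which are convertible to tuples. *)
Definition qc {F : fieldType} (u v : F) : F -> F -> F -> F -> quat u v :=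
  locked (@qmk F u v).

Section Coordinates.
Variables (F : fieldType) (u v : F).
Local Notation Q := (quat u v).

Lemma qcM a0 a1 a2 a3 b0 b1 b2 b3 :
  qc u v a0 a1 a2 a3 * qc u v b0 b1 b2 b3 =
  qc u v (a0 * b0 + u * a1 * b1 + v * a2 * b2 - u * v * a3 * b3)
      (a0 * b1 + a1 * b0 - v * a2 * b3 + v * a3 * b2)
      (a0 * b2 + a2 * b0 + u * a1 * b3 - u * a3 * b1)
      (a0 * b3 + a3 * b0 + a1 * b2 - a2 * b1).
Proof. by rewrite /qc -lock. Qed.

Lemma qcD a0 a1 a2 a3 b0 b1 b2 b3 :
  qc u v a0 a1 a2 a3 + qc u v b0 b1 b2 b3 = qc u v (a0 + b0) (a1 + b1) (a2 + b2) (a3 + b3).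
Proof. by rewrite /qc -lock. Qed.

Lemma qcN a0 a1 a2 a3 : - qc u v a0 a1 a2 a3 = qc u v (- a0) (- a1) (- a2) (- a3).
Proof. by rewrite /qc -lock. Qed.

Lemma qc0 : 0 = qc u v 0 0 0 0 :> Q. Proof. by rewrite /qc -lock. Qed.
Lemma qc1 : 1 = qc u v 1 0 0 0 :> Q. Proof. by rewrite /qc -lock. Qed.
Lemma qscE c : qsc u v c = qc u v c 0 0 0. Proof. by rewrite /qc -lock. Qed.
Lemma e1E : e1 u v = qc u v 0 1 0 0. Proof. by rewrite /qc -lock. Qed.
Lemma e2E : e2 u v = qc u v 0 0 1 0. Proof. by rewrite /qc -lock. Qed.

Lemma e12E : e12 u v = qc u v 0 0 0 1.
Proof. by rewrite /e12 e1E e2E qcM; congr qc; ring. Qed.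

Lemma qeltE a0 a1 a2 a3 : qelt u v a0 a1 a2 a3 = qc u v a0 a1 a2 a3.
Proof. by rewrite /qelt !qscE e1E e2E e12E !qcM !qcD; congr qc; ring. Qed.

Lemma mul_mx2 (a b c d a' b' c' d' : Q) :
  mx2 a b c d *m mx2 a' b' c' d' =
  mx2 (a * a' + b * c') (a * b' + b * d') (c * a' + d * c') (c * b' + d * d').
Proof.
apply/matrixP => i j; rewrite !mxE !big_ord_recl big_ord0 !mxE.
by case: i => [[|[|//]] ?]; case: j => [[|[|//]] ?]; rewrite /= addr0.
Qed.

Lemma scalar_mx2 (a : Q) : a%:M = mx2 a 0 0 a.
Proof.
apply/matrixP => i j; rewrite !mxE.
by case: i => [[|[|//]] ?]; case: j => [[|[|//]] ?].
Qed.

End Coordinates.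

Ltac qcoords :=
  rewrite ?qscE ?e1E ?e2E ?e12E ?qc1 ?qc0 ?(qcN, qcD, qcM).

Ltac mx2_field :=
  congr mx2; qcoords; congr qc; field.

Section InvolutionR.
Variables (F : fieldType) (u v s : F).
Hypotheses (two_neq0 : (2%:R : F) != 0) (v_neq0 : v != 0).
Hypotheses (s_neq0 : s != 0) (sqr_s : s ^+ 2 = u).

Lemma RmxE : Rmx u v s =
  mx2 (qc u v (1/2) (s^-1/2) 0 0) (qc u v 0 0 (1/2) (- (s^-1/2)))
      (qc u v 0 0 (v^-1/2) (v^-1 * s^-1/2)) (qc u v (1/2) (- (s^-1/2)) 0 0).
Proof. by rewrite /Rmx; congr mx2; qcoords; congr qc; ring. Qed.

Lemma Rmx_involutive : Rmx u v s *m Rmx u v s = 1%:M.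
Proof.
rewrite RmxE !scalar_mx2 mul_mx2 -sqr_s; mx2_field.
all: by rewrite ?two_neq0 ?s_neq0 ?v_neq0.
Qed.

Lemma Rmx_conj_scalar a0 a1 a2 a3 :
  Rmx u v s *m (qelt u v a0 a1 a2 a3)%:M *m Rmx u v s =
  mx2 (qsc u v (a0 + s * a1)) (qsc u v (v * (a2 + s * a3)))
      (qsc u v (a2 - s * a3)) (qsc u v (a0 - s * a1)).
Proof.
rewrite RmxE qeltE !scalar_mx2 !mul_mx2 -sqr_s; mx2_field.
all: by rewrite ?two_neq0 ?s_neq0 ?v_neq0.
Qed.

End InvolutionR.

Section InvolutionT.
Variables (F : fieldType) (u v t : F).
Hypotheses (two_neq0 : (2%:R : F) != 0) (u_neq0 : u != 0).
Hypotheses (t_neq0 : t != 0) (sqr_t : t ^+ 2 = v).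

Lemma TmxE : Tmx u v t =
  mx2 (qc u v (1/2) 0 (t^-1/2) 0) (qc u v 0 (1/2) 0 (t^-1/2))
      (qc u v 0 (u^-1/2) 0 (- (u^-1 * t^-1/2))) (qc u v (1/2) 0 (- (t^-1/2)) 0).
Proof. by rewrite /Tmx; congr mx2; qcoords; congr qc; ring. Qed.

Lemma Tmx_involutive : Tmx u v t *m Tmx u v t = 1%:M.
Proof.
rewrite TmxE !scalar_mx2 mul_mx2 -sqr_t; mx2_field.
all: by rewrite ?two_neq0 ?t_neq0 ?u_neq0.
Qed.

Lemma Tmx_conj_scalar a0 a1 a2 a3 :
  Tmx u v t *m (qelt u v a0 a1 a2 a3)%:M *m Tmx u v t =
  mx2 (qsc u v (a0 + t * a2)) (qsc u v (u * (a1 - t * a3)))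
      (qsc u v (a1 + t * a3)) (qsc u v (a0 - t * a2)).
Proof.
rewrite TmxE qeltE !scalar_mx2 !mul_mx2 -sqr_t; mx2_field.
all: by rewrite ?two_neq0 ?t_neq0 ?u_neq0.
Qed.

End InvolutionT.

Theorem lemma3 (F : closedFieldType) (u v su sv : F)
  (hchar : (2%:R : F) != 0) (hu : u != 0) (hv : v != 0)
  (hsu : su ^+ 2 = u) (hsv : sv ^+ 2 = v) :
  let R := Rmx u v su in
  let T := Tmx u v sv in
  [/\ R *m R = 1%:M, T *m T = 1%:M &
   forall a0 a1 a2 a3 : F,
     let a := qelt u v a0 a1 a2 a3 in
     R *m a%:M *m R =
       mx2 (qsc u v (a0 + su * a1)) (qsc u v (v * (a2 + su * a3)))
           (qsc u v (a2 - su * a3)) (qsc u v (a0 - su * a1))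
     /\
     T *m a%:M *m T =
       mx2 (qsc u v (a0 + sv * a2)) (qsc u v (u * (a1 - sv * a3)))
           (qsc u v (a1 + sv * a3)) (qsc u v (a0 - sv * a2))].
Proof.
have su_neq0 : su != 0 by apply: contraNneq hu => su0; rewrite -hsu su0 expr0n.
have sv_neq0 : sv != 0 by apply: contraNneq hv => sv0; rewrite -hsv sv0 expr0n.
split; [exact: Rmx_involutive | exact: Tmx_involutive |].
by move=> a0 a1 a2 a3; split; [exact: Rmx_conj_scalar | exact: Tmx_conj_scalar].
Qed.
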